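(* Let $n$ be a security parameter and $F\colon\{0,1\}^{\tilde n}\to\{0,1\}^m$ a function. Fix a family $\mathcal{G}=\{g\colon\{0,1\}^{\tilde n}\to\{0,1\}^\ell\}$ of pairwise independent hash functions, and define $F'\colon\{0,1\}^{\tilde n}\times\mathcal{G}\to\{0,1\}^m\times\mathcal{G}\times\{0,1\}^\ell$ by $F'(x,g)=(F(x),g,g(x))$. Then: (i) if $F^{-1}$ has real min-entropy at least $k$, then $(F')^{-1}$ has real min-entropy at least $k-\ell-s$ for any $s=\omega(\log n)$; (ii) if $F^{-1}$ has accessible max-entropy at most $k$, then $(F')^{-1}$ has accessible max-entropy at most $\max\{k-\ell+s,0\}$ for any $s=\omega(\log n)$.
   Context: A family $\mathcal{G}$ is pairwise independent if for all distinct $x_1,x_2$, for $g$ uniform in $\mathcal{G}$, $g(x_1),g(x_2)$ are independent and uniform. For a function $G$ with domain $\mathcal{D}$ and $X$ uniform on $\mathcal{D}$: $G^{-1}$ has real min-entropy at least $k$ if there is a negligible $\varepsilon(n)$ with $\Pr_x[\log|G^{-1}(G(x))|\ge k]\ge1-\varepsilon(n)$. A $G$-collision-finder is a randomized algorithm $A$ with $A(x;r)\in G^{-1}(G(x))$ for all $x,r$; $R$ denotes uniform coins. $G^{-1}$ has accessible max-entropy at most $k$ if for every probabilistic polynomial-time $G$-collision-finder $A$ there are sets $\{\mathcal{L}(x)\}$, each of size at most $2^k$, with $x\in\mathcal{L}(x)$, and a negligible $\varepsilon$ such that $\Pr[A(X;R)\in\mathcal{L}(X)]\ge1-\varepsilon(n)$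 for all sufficiently large $n$. *)

From HB Require Import structures.
From mathcomp Require Import all_boot all_order all_algebra.
From mathcomp Require Import all_classical all_reals.
From mathcomp Require Import exp.
Set Implicit Arguments. Unset Strict Implicit. Unset Printing Implicit Defensive.
Import Order.TTheory GRing.Theory Num.Theory.
Local Open Scope ring_scope.

Definition BS (k : nat) : finType := (k.-tuple bool).

Section Defs.
Variable R : realType.

Definition log2 (x : R) : R := ln x / ln 2.

Definition prob (T : finType) (P : pred T) : R :=
  #|[set x | P x]|%:R / #|T|%:R.

Definition negligible (eps : nat -> R) : Prop :=
  forall c : nat, exists N : nat, forall n : nat, (N <= n)%N ->
    `|eps n| <= (n%:R ^+ c)^-1.

Definition omega_log (s : nat -> R) : Prop :=
  forall C : R, 0 < C -> exists N : nat, forall n : nat, (N <= n)%N ->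
    C * ln (n%:R) <= s n.

Definition pairwise_independent (nin l : nat) (G : finType)
    (h : G -> BS nin -> BS l) : Prop :=
  forall x1 x2 : BS nin, x1 != x2 -> forall y1 y2 : BS l,
    prob [pred g : G | (h g x1 == y1) && (h g x2 == y2)]
    = prob [pred g : G | h g x1 == y1] * prob [pred g : G | h g x2 == y2]
    /\ prob [pred g : G | h g x1 == y1] = ((2 ^ l)%:R)^-1
    /\ prob [pred g : G | h g x2 == y2] = ((2 ^ l)%:R)^-1.

Definition preim_size (D C : finType) (f : D -> C) (x : D) : nat :=
  #|[set x' | f x' == f x]|.

Definition real_min_entropy_ge (D C : nat -> finType)
    (f : forall n, D n -> C n) (k : nat -> R) : Prop :=
  exists eps : nat -> R, negligible eps /\
    forall n : nat,
      1 - eps n <= prob [pred x : D n | k n <= log2 (preim_size (f n) x)%:R].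

(* a randomized algorithm D n -> D n, with uniform coins in the finite type coin n *)
Record ralg (D : nat -> finType) := RAlg {
  coin : nat -> finType;
  run : forall n, D n -> coin n -> D n }.
Arguments coin {D} r n.
Arguments run {D} r n.

Definition collision_finder (D C : nat -> finType) (f : forall n, D n -> C n)
    (A : ralg D) : Prop :=
  forall n (x : D n) (r : coin A n), f n (run A n x r) = f n x.

(* f^{-1} has accessible max-entropy at most k, relative to a class Eff of
   "efficient" (PPT) algorithms *)
Definition acc_max_entropy_le (Eff : forall D : nat -> finType, ralg D -> Prop)
    (D C : nat -> finType) (f : forall n, D n -> C n) (k : nat -> R) : Prop :=
  forall A : ralg D, Eff D A -> collision_finder f A ->
    exists L : forall n, D n -> {set D n},
      (forall n (x : D n), (#|L n x|%:R : R) <= powR 2 (k n)) /\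
      (forall n (x : D n), x \in L n x) /\
      exists eps : nat -> R, negligible eps /\
        exists N : nat, forall n : nat, (N <= n)%N ->
          1 - eps n <= prob [pred xr : (D n * coin A n)%type |
                               run A n xr.1 xr.2 \in L n xr.1].
End Defs.
Arguments coin {D} r n.
Arguments run {D} r n.

Definition DomF' (nt : nat -> nat) (G : nat -> finType) (n : nat) : finType :=
  (BS (nt n) * G n)%type.
Definition CodF' (m l : nat -> nat) (G : nat -> finType) (n : nat) : finType :=
  (BS (m n) * G n * BS (l n))%type.

Definition Fprime (nt m l : nat -> nat) (G : nat -> finType)
    (F : forall n, BS (nt n) -> BS (m n))
    (h : forall n, G n -> BS (nt n) -> BS (l n))
    (n : nat) (xg : DomF' nt G n) : CodF' m l G n :=
  (F n xg.1, xg.2, h n xg.2 xg.1).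

Definition proj_alg (nt : nat -> nat) (G : nat -> finType)
    (A' : ralg (DomF' nt G)) : ralg (fun n => BS (nt n)) :=
  @RAlg (fun n => BS (nt n)) (fun n => (G n * coin A' n)%type)
    (fun n x gr => (run A' n (x, gr.1) gr.2).1).

(* (i) Fix g. The fibre F^-1(F x) is cut by the value of g into at most 2^l cells, and
   the cells with fewer than 2^(k-l-s) points cover at most 2^(k-s) points, a 2^-s
   fraction of a fibre of size at least 2^k.  Hence, except with probability 2^-s, the
   F'-preimage of (x, g), which is such a cell, has at least 2^(k-l-s) points.
   (ii) An F'-collision-finder A' yields the F-collision-finder that samples g itself;
   its outputs lie in L(x) with |L(x)| <= 2^k.  By pairwise independence the number of
   other points of L(x) hashing with x has mean at most 2^(k-l), so by Markov's
   inequality the cell of x in L(x) exceeds 2^max(k-l+s,0) points with probability at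
   most 2 * 2^-s; L'(x, g) is that cell (times {g}) when it is small, and {(x, g)}
   otherwise.  Both error terms are negligible because s = omega(log n). *)

From HB Require Import structures.
From mathcomp Require Import all_boot all_order all_algebra.
From mathcomp Require Import all_classical all_reals.
From mathcomp Require Import exp.
From mathcomp Require Import lra.
Set Implicit Arguments. Unset Strict Implicit. Unset Printing Implicit Defensive.
Import Order.TTheory GRing.Theory Num.Theory.
Local Open Scope ring_scope.

Section FiniteProbability.
Variable R : realType.
Implicit Types (T A B : finType).

Definition expect T (f : T -> R) : R := (\sum_x f x) / #|T|%:R.

Lemma natr_card_set T (D : {pred T}) (P : pred T) :
  (#|[set x in D | P x]|%:R : R) = \sum_(x in D) (P x)%:R.
Proof.
rewrite -sum1_card natr_sum [RHS]big_mkcond [LHS]big_mkcond /=.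
by apply: eq_bigr => x _; rewrite !inE; case: (x \in D); case: (P x).
Qed.

Lemma prob_expect T (P : pred T) : prob R P = expect (fun x => (P x)%:R).
Proof.
rewrite /prob /expect; congr (_ / _).
by rewrite -(natr_card_set predT); congr (#|_|%:R); apply/setP => x; rewrite !inE.
Qed.

Lemma eq_prob T (P Q : pred T) : P =1 Q -> prob R P = prob R Q.
Proof. by move=> PQ; rewrite /prob (eq_finset _ PQ). Qed.

Lemma prob_ge0 T (P : pred T) : 0 <= prob R P.
Proof. by rewrite divr_ge0. Qed.

Lemma ler_expect T (f g : T -> R) : (forall x, f x <= g x) -> expect f <= expect g.
Proof. by move=> fg; rewrite ler_wpM2r ?invr_ge0 //; exact: ler_sum. Qed.

Lemma expect_le_cst T (f : T -> R) (d : R) :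
  0 <= d -> (forall x, f x <= d) -> expect f <= d.
Proof.
move=> d0 fd; apply: (@le_trans _ _ (expect (fun=> d))); first exact: ler_expect.
rewrite /expect sumr_const -[d *+ _]mulr_natr.
have [->|T0] := eqVneq #|T| 0%N; first by rewrite mulr0 mul0r.
by rewrite mulfK // pnatr_eq0.
Qed.

Lemma expectZ T (a : R) (f : T -> R) :
  expect (fun x => a * f x) = a * expect f.
Proof. by rewrite /expect -mulr_sumr mulrA. Qed.

Lemma expect_sum T (I : finType) (D : {pred I}) (f : I -> T -> R) :
  expect (fun x => \sum_(i in D) f i x) = \sum_(i in D) expect (f i).
Proof. by rewrite /expect exchange_big mulr_suml. Qed.

Lemma expect_pair A B (f : A * B -> R) :
  expect f = expect (fun a => expect (fun b => f (a, b))).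
Proof.
rewrite /expect.
have -> : \sum_z f z = \sum_a \sum_b f (a, b) by rewrite pair_big; apply: eq_bigr => -[].
rewrite card_prod natrM invfM -mulr_suml.
by rewrite [_^-1 * _]mulrC mulrA.
Qed.

Lemma prob_pair A B (P : pred (A * B)) :
  prob R P = expect (fun a => prob R [pred b | P (a, b)]).
Proof.
rewrite prob_expect expect_pair; congr expect; apply/funext => a.
by rewrite prob_expect.
Qed.

Lemma prob_bij T T' (f : T -> T') (P : pred T') :
  bijective f -> prob R [pred x | P (f x)] = prob R P.
Proof.
move=> f_bij; rewrite /prob (bij_eq_card f_bij).
have -> : [set x | P (f x)] = f @^-1: [set y | P y] by apply/setP => x; rewrite !inE.
by rewrite (on_card_preimset (onW_bij _ f_bij)).
Qed.

Lemma prob_fst A B (P : pred A) :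
  (0 < #|B|)%N -> prob R [pred z : A * B | P z.1] = prob R P.
Proof.
move=> B0; rewrite /prob card_prod.
have -> : [set z : A * B | P z.1] = finset.setX [set a | P a] [set: B].
  by apply/setP => -[a b]; rewrite !inE andbT.
by rewrite cardsX cardsT !natrM invfM mulrACA divff ?mulr1 // pnatr_eq0 -lt0n.
Qed.

Lemma prob_fst_le A B (P : pred A) : prob R [pred z : A * B | P z.1] <= prob R P.
Proof.
have [B0|B0] := posnP #|B|; last by rewrite prob_fst.
by rewrite /prob card_prod B0 muln0 invr0 mulr0 prob_ge0.
Qed.

Lemma prob_subadditive T (P Q S : pred T) :
  (forall x, Q x -> P x || S x) -> prob R Q <= prob R P + prob R S.
Proof.
move=> QPS; rewrite /prob -mulrDl ler_wpM2r ?invr_ge0 // -natrD ler_nat.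
apply: leq_trans (leq_card_setU _ _).1; apply: subset_leq_card.
by apply/fintype.subsetP => x; rewrite !inE; exact: QPS.
Qed.

Lemma sum_by_fibres (X W : finType) (f : X -> W) (phi : W -> R) :
  \sum_x phi (f x) = \sum_w #|[set x | f x == w]|%:R * phi w.
Proof.
rewrite (partition_big f xpredT) //=; apply: eq_bigr => w _.
rewrite (eq_bigr (fun=> phi w)) => [|x /eqP -> //].
by rewrite sumr_const cardsE mulr_natl.
Qed.

End FiniteProbability.

Section PowersOfTwo.
Variable R : realType.

Lemma powR2D (a b : R) : 2 `^ (a + b) = 2 `^ a * 2 `^ b.
Proof. by rewrite powRD // pnatr_eq0 implybT. Qed.

Lemma powR2_natr (n : nat) : 2 `^ n%:R = (2 ^ n)%:R :> R.
Proof. by rewrite powR_mulrn ?ler0n // natrX. Qed.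

Lemma powR2_ge1 (a : R) : 0 <= a -> 1 <= 2 `^ a.
Proof.
by move=> a0; rewrite -[X in X <= _](powRr0 2); apply: ler_powR; rewrite ?ler1n.
Qed.

Lemma log2_ge (k c : R) : 0 < c -> (k <= log2 c) = (2 `^ k <= c).
Proof.
move=> c0; rewrite /log2 ler_pdivlMr ?ln_gt0 ?ltr1n // -ln_powR.
by rewrite ler_ln // posrE powR_gt0.
Qed.

End PowersOfTwo.

Section Negligible.
Variable R : realType.
Implicit Types eps : nat -> R.

Lemma ler_mul_inv_exprS (x a : R) (c : nat) :
  0 < x -> a <= x -> a * (x ^+ c.+1)^-1 <= (x ^+ c)^-1.
Proof.
move=> x0 ax; rewrite exprSr invfM mulrCA ger_pMr ?invr_gt0 ?exprn_gt0 //.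
by rewrite ler_pdivrMr // mul1r.
Qed.

Lemma negligibleD eps1 eps2 :
  negligible eps1 -> negligible eps2 -> negligible (fun n => eps1 n + eps2 n).
Proof.
move=> eps1_negl eps2_negl c.
have [N1 HN1] := eps1_negl c.+1; have [N2 HN2] := eps2_negl c.+1.
exists (maxn 2 (maxn N1 N2)) => n; rewrite !geq_max => /and3P[n2 nN1 nN2].
have n0 : (0 : R) < n%:R by rewrite ltr0n (leq_trans _ n2).
have n2r : (2 : R) <= n%:R by rewrite ler_nat.
have := ler_mul_inv_exprS c n0 n2r; have := HN1 n nN1; have := HN2 n nN2.
have := ler_normD (eps1 n) (eps2 n); lra.
Qed.

Lemma negligibleZ (a : R) eps : negligible eps -> negligible (fun n => a * eps n).
Proof.
move=> eps_negl c; have [N HN] := eps_negl c.+1.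
exists (maxn (maxn N 1) (Num.Def.archi_bound `|a|)) => n.
rewrite !geq_max => /andP[/andP[nN n1] na].
have n0 : (0 : R) < n%:R by rewrite ltr0n.
have an : `|a| <= n%:R.
  by apply: le_trans (ltW (archi_boundP (normr_ge0 a))) _; rewrite ler_nat.
rewrite normrM; apply: le_trans (ler_mul_inv_exprS c n0 an).
exact: ler_wpM2l (HN n nN).
Qed.

Lemma negligible_powR2N (s : nat -> R) :
  omega_log s -> negligible (fun n => 2 `^ (- s n)).
Proof.
move=> s_omega c.
have ln2_gt0 : (0 : R) < ln 2 by rewrite ln_gt0 // ltr1n.
have [N HN] := s_omega (c.+1%:R / ln 2) (divr_gt0 (ltr0Sn _ _) ln2_gt0).
exists (maxn N 1) => n; rewrite geq_max => /andP[nN n1].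
have n0 : (0 : R) < n%:R by rewrite ltr0n.
rewrite ger0_norm ?powR_ge0 // powRN lef_pV2 ?posrE ?exprn_gt0 ?powR_gt0 //.
rewrite -ler_ln ?posrE ?exprn_gt0 ?powR_gt0 // lnXn // ln_powR -[_ *+ c]mulr_natl.
have := HN n nN; rewrite mulrAC ler_pdivrMr // => /(le_trans _); apply.
by apply: ler_wpM2r; rewrite ?ln_ge0 ?ler1n ?ler_nat.
Qed.

End Negligible.

Lemma card_BS (l : nat) : #|BS l| = (2 ^ l)%N.
Proof. by rewrite card_tuple card_bool. Qed.

Section RealMinEntropy.
Variable R : realType.

Lemma preim_size_gt0 (X W : finType) (f : X -> W) (x : X) : (0 < preim_size f x)%N.
Proof. by apply/card_gt0P; exists x; rewrite inE. Qed.

Lemma prob_small_hash_cell (X V Y : finType) (F : X -> V) (g : X -> Y) (E T : R) :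
  0 < E -> 0 <= T ->
  prob R [pred x | (E <= (preim_size F x)%:R) &&
                   ((preim_size (fun x => (F x, g x)) x)%:R < T)]
  <= #|Y|%:R * T / E.
Proof.
move=> E0 T0; set K := #|Y|%:R * T / E.
have K0 : 0 <= K by rewrite divr_ge0 ?mulr_ge0 // ltW.
pose n v : R := #|[set x | F x == v]|%:R.
pose m (w : V * Y) : R := #|[set x | (F x, g x) == w]|%:R.
pose large v := E <= n v.
pose bad (w : V * Y) := large w.1 && (m w < T).
have small_cell w : m w * (bad w)%:R <= (large w.1)%:R * T.
  rewrite /bad; case: (large w.1); case: ltrP => mT;
    by rewrite ?mulr0 ?mulr1 ?mul0r ?mul1r // ltW.
have large_fibre v : \sum_(y : Y) (large v)%:R * T <= n v * K.
  rewrite sumr_const /K /large; case: (lerP E (n v)) => [Env|_].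
    rewrite mulr1n mul1r -[T *+ _]mulr_natl mulrCA.
    by apply: ler_peMr; rewrite ?mulr_ge0 // ler_pdivlMr // mul1r.
  by rewrite mulr0n mul0r mul0rn mulr_ge0.
have fibres_partition : \sum_v n v = #|X|%:R.
  transitivity (\sum_(x : X) (1 : R)); last by rewrite sumr_const.
  by rewrite (sum_by_fibres F (fun=> 1)); apply: eq_bigr => v _; rewrite mulr1.
have count_bad : \sum_x (bad (F x, g x))%:R <= #|X|%:R * K.
  rewrite (sum_by_fibres (fun x => (F x, g x)) (fun w => (bad w)%:R)).
  apply: le_trans (ler_sum _ (fun w _ => small_cell w)) _.
  have -> : \sum_(w : V * Y) (large w.1)%:R * T = \sum_v \sum_(y : Y) (large v)%:R * T.
    by rewrite pair_big; apply: eq_bigr => -[].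
  apply: le_trans (ler_sum _ (fun v _ => large_fibre v)) _.
  by rewrite -mulr_suml fibres_partition.
rewrite prob_expect /expect; have [X0|X0] := posnP #|X|.
  by rewrite X0 invr0 mulr0.
by rewrite ler_pdivrMr ?ltr0n // mulrC.
Qed.

Lemma preim_size_hashed (X G V Y : finType) (F : X -> V) (h : G -> X -> Y) x g :
  preim_size (fun xg : X * G => (F xg.1, xg.2, h xg.2 xg.1)) (x, g) =
  preim_size (fun x => (F x, h g x)) x.
Proof.
rewrite /preim_size /=.
have -> : [set xg : X * G | (F xg.1, xg.2, h xg.2 xg.1) == (F x, g, h g x)] =
          finset.setX [set x' | (F x', h g x') == (F x, h g x)] [set g].
  apply/finset.setP => -[x' g']; rewrite !inE /= !xpair_eqE.
  by case: (eqVneq g' g) => [->|]; rewrite ?andbT ?andbF.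
by rewrite cardsX cards1 muln1.
Qed.

Lemma prob_min_entropy_hashed (X G V : finType) (l : nat) (F : X -> V)
    (h : G -> X -> BS l) (k s eps : R) :
  (0 < #|G|)%N ->
  1 - eps <= prob R [pred x | k <= log2 (preim_size F x)%:R] ->
  1 - (eps + 2 `^ (- s)) <=
  prob R [pred xg : X * G | k - l%:R - s <=
    log2 (preim_size (fun xg : X * G => (F xg.1, xg.2, h xg.2 xg.1)) xg)%:R].
Proof.
move=> G0 HF; set P := [pred xg | _].
set T := 2 `^ (k - l%:R - s).
pose Q := [pred xg : X * G | k <= log2 (preim_size F xg.1)%:R].
pose bad (xg : X * G) := (2 `^ k <= (preim_size F xg.1)%:R) &&
  ((preim_size (fun x => (F x, h xg.2 x)) xg.1)%:R < T).
have cover xg : Q xg -> P xg || bad xg.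
  case: xg => x g; rewrite /P /Q /bad /= !log2_ge ?ltr0n ?preim_size_gt0 //.
  by rewrite preim_size_hashed => ->; case: lerP.
have bad_small : prob R bad <= 2 `^ (- s).
  have swap_bij : bijective (fun z : G * X => (z.2, z.1)).
    by exists (fun z => (z.2, z.1)) => -[].
  rewrite -(prob_bij R bad swap_bij) prob_pair.
  apply: expect_le_cst => [|g]; first exact: powR_ge0.
  apply: le_trans (prob_small_hash_cell F (h g) (powR_gt0 _ _) (powR_ge0 _ _)) _ => //.
  rewrite card_BS -powR2_natr.
  have -> : 2 `^ l%:R * T = 2 `^ (- s) * 2 `^ k.
    by rewrite -!powR2D; congr (2 `^ _); lra.
  by rewrite mulfK // gt_eqF // powR_gt0.
have QF : prob R Q = prob R [pred x | k <= log2 (preim_size F x)%:R].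
  exact: (@prob_fst R X G (fun x => k <= log2 (preim_size F x)%:R) G0).
have := prob_subadditive R cover; lra.
Qed.

End RealMinEntropy.

Section AccessibleMaxEntropy.
Variable R : realType.

Definition hash_cell (X G Y : finType) (h : G -> X -> Y) (L : {set X}) (g : G)
  (x : X) : {set X} := [set x' in L | h g x' == h g x].

Definition hashed_list (X G Y : finType) (h : G -> X -> Y) (L : X -> {set X})
  (M : R) (xg : X * G) : {set X * G} :=
  if #|hash_cell h (L xg.1) xg.2 xg.1|%:R <= M
  then [set (x', xg.2) | x' in hash_cell h (L xg.1) xg.2 xg.1]
  else [set xg].

Lemma card_hashed_list (X G Y : finType) (h : G -> X -> Y)
    (L : X -> {set X}) (M : R) (xg : X * G) :
  1 <= M -> #|hashed_list h L M xg|%:R <= M.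
Proof.
rewrite /hashed_list; case: ifP => [cell_small _|_]; last by rewrite cards1.
by rewrite card_imset // => x1 x2 [].
Qed.

Lemma mem_hashed_list (X G Y : finType) (h : G -> X -> Y)
    (L : X -> {set X}) (M : R) (xg : X * G) :
  xg.1 \in L xg.1 -> xg \in hashed_list h L M xg.
Proof.
case: xg => x g /= xL; rewrite /hashed_list /=; case: ifP => _; last exact: set11.
by apply/imsetP; exists x; rewrite // inE xL eqxx.
Qed.

Lemma pairwise_independent_collision nin l (G : finType) (h : G -> BS nin -> BS l)
    (x1 x2 : BS nin) :
  pairwise_independent R h -> x1 != x2 ->
  prob R [pred g | h g x1 == h g x2] = (2 ^ l)%:R^-1.
Proof.
move=> h_pi x12.
have split_value g :
    (h g x1 == h g x2)%:R = \sum_y ((h g x1 == y) && (h g x2 == y))%:R :> R.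
  rewrite (bigD1 (h g x1)) //= eqxx [h g x2 == _]eq_sym big1 ?addr0 // => y.
  by rewrite [y == _]eq_sym => /negbTE ->.
rewrite prob_expect (_ : (fun g => _) =
  fun g => \sum_y ((h g x1 == y) && (h g x2 == y))%:R); last exact/funext.
rewrite expect_sum (eq_bigr (fun=> (2 ^ l)%:R^-1 * (2 ^ l)%:R^-1)) => [|y _]; last first.
  have [joint [p1 p2]] := h_pi x1 x2 x12 y y.
  by rewrite -{1}p1 -p2 -joint prob_expect.
rewrite sumr_const [#|_|]card_BS -[(_ / _) *+ _]mulr_natr divfK //.
by rewrite pnatr_eq0 expn_eq0.
Qed.

(* M >= 1 forces c >= 1, so that M < c + 1 <= 2 c. *)
Lemma indicator_ltS_le (M : R) (c : nat) :
  1 <= M -> (M < c.+1%:R)%R%:R <= 2 / M * c%:R.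
Proof.
move=> M1; have M0 : 0 < M by lra.
case: (ltrP M c.+1%:R) => [cM|_]; last first.
  by rewrite mulr0n mulr_ge0 ?divr_ge0 ?ler0n // ltW.
rewrite mulr1n mulrAC ler_pdivlMr // mul1r.
case: c cM => [|c] cM; first lra.
have := ler0n R c; rewrite -!natr1 in cM *; lra.
Qed.

Lemma prob_large_hash_cell nin l (G : finType) (h : G -> BS nin -> BS l)
    (L : {set BS nin}) (x : BS nin) (M : R) :
  pairwise_independent R h -> x \in L -> 1 <= M ->
  prob R [pred g | M < #|hash_cell h L g x|%:R] <=
  2 / M * (#|L|%:R / (2 ^ l)%:R).
Proof.
move=> h_pi xL M1; have M0 : 0 < M by lra.
pose others g := [set x' in L :\ x | h g x' == h g x].
have card_cell g : #|hash_cell h L g x| = #|others g|.+1.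
  rewrite (cardsD1 x) !inE xL eqxx add1n.
  rewrite (_ : hash_cell h L g x :\ x = others g) //.
  by apply/finset.setP => x'; rewrite !inE andbA.
have point g : (M < #|hash_cell h L g x|%:R)%R%:R <= 2 / M * #|others g|%:R.
  by rewrite card_cell; apply: indicator_ltS_le.
rewrite prob_expect; apply: le_trans (ler_expect point) _.
rewrite expectZ; apply: ler_wpM2l; first by rewrite divr_ge0 // ltW.
rewrite (_ : (fun g => _) = fun g => \sum_(x' in L :\ x) (h g x' == h g x)%:R);
  last by apply/funext => g; rewrite natr_card_set.
rewrite expect_sum (eq_bigr (fun=> (2 ^ l)%:R^-1)) => [|x']; last first.
  by rewrite !inE => /andP[x'x _]; rewrite -prob_expect pairwise_independent_collision.
rewrite sumr_const -[_^-1 *+ _]mulr_natl; apply: ler_wpM2r; first by rewrite invr_ge0.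
rewrite ler_nat; exact/subset_leq_card/subD1set.
Qed.

Lemma prob_hashed_list_ge nin l (G C : finType) (h : G -> BS nin -> BS l)
    (A : BS nin * G -> C -> BS nin * G) (L : BS nin -> {set BS nin}) (k s eps : R) :
  pairwise_independent R h ->
  (forall xg r, (A xg r).2 = xg.2) ->
  (forall xg r, h xg.2 (A xg r).1 = h xg.2 xg.1) ->
  (forall x, #|L x|%:R <= 2 `^ k) -> (forall x, x \in L x) ->
  1 - eps <= prob R [pred xr : BS nin * (G * C) |
                      (A (xr.1, xr.2.1) xr.2.2).1 \in L xr.1] ->
  1 - (eps + 2 * 2 `^ (- s)) <=
  prob R [pred xr : (BS nin * G) * C |
    A xr.1 xr.2 \in hashed_list h L (2 `^ Num.max (k - l%:R + s) 0) xr.1].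
Proof.
move=> h_pi A_g A_h L_card L_mem HA; set P := [pred xr | _].
set M := 2 `^ Num.max (k - l%:R + s) 0.
have M1 : 1 <= M by rewrite /M powR2_ge1 // le_max lexx orbT.
pose Q := [pred xr : (BS nin * G) * C | (A xr.1 xr.2).1 \in L xr.1.1].
pose large_cell (xg : BS nin * G) := M < #|hash_cell h (L xg.1) xg.2 xg.1|%:R.
pose B := [pred xr : (BS nin * G) * C | large_cell xr.1].
have cover xr : Q xr -> P xr || B xr.
  case: xr => -[x g] r; rewrite /P /Q /B /large_cell /hashed_list /=.
  case: ifP => [_ Ax|/negbT]; last by rewrite -ltNge => ->; rewrite orbT.
  apply/orP; left; apply/imsetP; exists (A (x, g) r).1.
    by rewrite inE Ax (A_h (x, g) r) eqxx.
  by have := A_g (x, g) r; case: (A (x, g) r) => x' g' /= ->.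
have QA : prob R Q = prob R [pred xr : BS nin * (G * C) |
                               (A (xr.1, xr.2.1) xr.2.2).1 \in L xr.1].
  have assoc_bij : bijective (fun z : (BS nin * G) * C => (z.1.1, (z.1.2, z.2))).
    by exists (fun z => ((z.1, z.2.1), z.2.2)) => [[[]]|[? []]].
  by rewrite -(prob_bij R _ assoc_bij); apply: eq_prob => -[[x g] r].
have B_small : prob R B <= 2 * 2 `^ (- s).
  apply: le_trans (@prob_fst_le R _ C large_cell) _.
  rewrite prob_pair; apply: expect_le_cst => [|x]; first by rewrite mulr_ge0 ?powR_ge0.
  apply: le_trans (prob_large_hash_cell h_pi (L_mem x) M1) _.
  have L_small : #|L x|%:R <= 2 `^ (- s) * (M * (2 ^ l)%:R).
    apply: le_trans (L_card x) _.
    have -> : 2 `^ k = 2 `^ (- s) * (2 `^ (k - l%:R + s) * 2 `^ l%:R).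
      by rewrite -!powR2D; congr (2 `^ _); lra.
    rewrite powR2_natr; apply: ler_wpM2l; first exact: powR_ge0.
    apply: ler_wpM2r => //; apply: ler_powR; rewrite ?ler1n // le_max lexx //.
  have M0 : 0 < M by lra.
  rewrite -mulrA; apply: ler_wpM2l => //.
  by rewrite mulrCA -invfM ler_pdivrMr ?mulr_gt0 ?ltr0n ?expn_gt0.
have := prob_subadditive R cover; lra.
Qed.

End AccessibleMaxEntropy.

Lemma Fprime_collision (nt m l : nat -> nat) (G : nat -> finType)
    (F : forall n, BS (nt n) -> BS (m n))
    (h : forall n, G n -> BS (nt n) -> BS (l n)) n (xg xg' : DomF' nt G n) :
  Fprime F h xg' = Fprime F h xg ->
  [/\ F n xg'.1 = F n xg.1, xg'.2 = xg.2 & h n xg.2 xg'.1 = h n xg.2 xg.1].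
Proof. by case: xg xg' => [x g] [x' g'] [-> -> ->]. Qed.

Unset Implicit Arguments.

Theorem lemma5p4 (R : realType) (nt m l : nat -> nat) (G : nat -> finType)
    (F : forall n, BS (nt n) -> BS (m n))
    (h : forall n, G n -> BS (nt n) -> BS (l n))
    (G_nonempty : forall n, (0 < #|G n|)%N)
    (G_pi : forall n, pairwise_independent R (@h n)) :
  (* (i) *)
  (forall (k s : nat -> R), omega_log s ->
     real_min_entropy_ge F k ->
     real_min_entropy_ge (Fprime F h)
       (fun n => k n - (l n)%:R - s n))
  /\
  (* (ii) *)
  (forall Eff : forall D : nat -> finType, ralg D -> Prop,
     (forall A' : ralg (DomF' nt G), Eff _ A' -> Eff _ (proj_alg A')) ->
     forall (k s : nat -> R), omega_log s ->
     acc_max_entropy_le Eff F k ->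
     acc_max_entropy_le Eff (Fprime F h)
       (fun n => Num.max (k n - (l n)%:R + s n) 0)).
Proof.
split=> [k s s_omega [eps [eps_negl HF]] |
         Eff Eff_proj k s s_omega HF A' A'_eff A'_coll].
  exists (fun n => eps n + 2 `^ (- s n)); split.
    exact: negligibleD eps_negl (negligible_powR2N s_omega).
  by move=> n; apply: prob_min_entropy_hashed (G_nonempty n) (HF n).
have A_coll : collision_finder F (proj_alg A').
  by move=> n x [g r]; have [] := Fprime_collision (A'_coll n (x, g) r).
have [L [L_card [L_mem [eps [eps_negl [N HN]]]]]] := HF _ (Eff_proj _ A'_eff) A_coll.
exists (fun n => hashed_list (h n) (L n) (2 `^ Num.max (k n - (l n)%:R + s n) 0)).
split; [|split].
- by move=> n xg; apply/card_hashed_list/powR2_ge1; rewrite le_max lexx orbT.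
- by move=> n xg; apply: mem_hashed_list.
exists (fun n => eps n + 2 * 2 `^ (- s n)); split.
  exact: negligibleD eps_negl (negligibleZ 2 (negligible_powR2N s_omega)).
exists N => n Nn; apply: prob_hashed_list_ge (G_pi n) _ _ (L_card n) (L_mem n) (HN n Nn).
  all: by move=> xg r; have [] := Fprime_collision (A'_coll n xg r).
Qed.
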